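(* Let $T=(F_0,F_1,F_2)$ be a template of order $10$ and type $(4,4,2,2,2)$ (so rows $0$–$3$ and columns $0$–$3$ are relational, and each $F_i$ has exactly two ones in each row and column). Then: (i) every cell in $Q_2$ or $Q_3$ has type ${*}{*}000$; (ii) every cell in $Q_1$ has type $11001$, $11010$, $11100$ or $11111$, and each of these four types occurs exactly once in each row and exactly once in each column of $Q_1$; (iii) every cell in $Q_4$ has type $00001$, $00010$ or $00100$, and each of these three types occurs exactly twice in each row and exactly twice in each column of $Q_4$. Here ${*}$ denotes an arbitrary bit.
   Context: For $n$ even and even $\lambda_0,\dots,\lambda_{k-1}$, a template of order $n$ and type $(\lambda_0,\dots,\lambda_{k-1})$ is a list $(F_0,\dots,F_{k-3})$ of $n\times n$ arrays over $\{0,1\}$ such that $F_{t-2}$ has exactly $\lambda_t$ ones in each row and each column, the arrays are pairwise orthogonal (for arrays $F,F'$ with $\lambda,\mu$ ones per row/column, each pair $(a,b)\in\{0,1\}^2$ occurs in exactly $f_af'_b$ cells, where $f_1=\lambda,f_0=n-\lambda,f'_1=\mu,f'_0=n-\mu$), rows $0,\dots,\lambda_0-1$ and columns $0,\dots,\lambda_1-1$ are called relational, and every cell has weight congruent to $\chi=\frac12\sum_i\lambda_i$ modulo $2$. The type of cell $(i,j)$ is the binary string $xyF_0[i,j]\cdots F_{k-3}[i,j]$ where $x=1$ iff row $i$ is relational and $y=1$ iff column $j$ is relational; its weight is its number of ones. (For type $(4,4,2,2,2)$, $\chi=7$, so all cells have odd weight.) Quadrants for order $10$ with $\lambda_0=\lambda_1=4$: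 $Q_1$ = rows $0$–$3$ × columns $0$–$3$; $Q_2$ = rows $0$–$3$ × columns $4$–$9$; $Q_3$ = rows $4$–$9$ × columns $0$–$3$; $Q_4$ = rows $4$–$9$ × columns $4$–$9$. *)

From mathcomp Require Import all_boot all_algebra.
Set Implicit Arguments. Unset Strict Implicit. Unset Printing Implicit Defensive.

Definition bArray (n : nat) := 'M[bool]_n.

Definition regular n (F : bArray n) (lam : nat) : Prop :=
  (forall i : 'I_n, #|[set j : 'I_n | F i j]| = lam) /\
  (forall j : 'I_n, #|[set i : 'I_n | F i j]| = lam).

Definition fcount (n lam : nat) (a : bool) : nat := if a then lam else n - lam.

Definition orthogonal n (F G : bArray n) (lam mu : nat) : Prop :=
  forall a b : bool,
    #|[set p : 'I_n * 'I_n | (F p.1 p.2 == a) && (G p.1 p.2 == b)]| =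
    fcount n lam a * fcount n mu b.

Definition zero_array n : bArray n := const_mx false.

Definition rel_row n (lam : seq nat) (i : 'I_n) : bool := i < nth 0 lam 0.
Definition rel_col n (lam : seq nat) (j : 'I_n) : bool := j < nth 0 lam 1.

Definition cell_type n (lam : seq nat) (Fs : seq (bArray n)) (i j : 'I_n) : seq bool :=
  [:: rel_row lam i, rel_col lam j & [seq (F : 'M[bool]_n) i j | F <- Fs]].

Definition weight (s : seq bool) : nat := count id s.

Definition template n (lam : seq nat) (Fs : seq (bArray n)) : Prop :=
  [/\ ~~ odd n /\ all (fun l => ~~ odd l) lam,
      size lam = (size Fs).+2,
      (forall t, t < size Fs -> regular (nth (zero_array n) Fs t) (nth 0 lam t.+2)),
      (forall s t, s < t -> t < size Fs ->
          orthogonal (nth (zero_array n) Fs s) (nth (zero_array n) Fs t)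
                     (nth 0 lam s.+2) (nth 0 lam t.+2)) &
      (forall i j : 'I_n, weight (cell_type lam Fs i j) = (sumn lam)./2 %[mod 2])].

(* Let d mark the cells of Q2 and Q3.  Every cell has odd weight, so among the four bits
   d, F0, F1, F2 of a cell an odd number w is set, and 3 w = 3 + 2 (number of pairs of set
   bits).  Summing over the 100 cells, the totals 3 * 20 + 48 of set bits and 4 common ones
   of each pair F_s, F_t (orthogonality) leave no room for a one of any F_t in Q2 or Q3.
   Hence in every row and column the six ones of F0, F1, F2 lie in the diagonal quadrant,
   each of whose cells carries one or three of them: with m cells carrying three,
   #cells + 2 m = 6.  A relational line (4 cells) thus has m = 1 and one cell of each single
   pattern, a non-relational line (6 cells) has m = 0 and two cells of each single pattern. *)

From mathcomp Require Import all_boot all_algebra zify.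
Set Implicit Arguments. Unset Strict Implicit. Unset Printing Implicit Defensive.

Lemma card_set_sum (T : finType) (P : pred T) : #|[set x | P x]| = \sum_x P x.
Proof. by rewrite -sum1dep_card big_mkcond; apply: eq_bigr => x _; case: (P x). Qed.

(* If w := a + b + c + d is odd then w is 1 or 3, so 3 w - 3 = w (w - 1) is twice the number
   of pairs of ones, among which those involving d number 2 [d && [|| a, b | c]]. *)
Lemma odd_weight4 (a b c d : bool) : odd (a + b + c + d) ->
  3 * (a + b + c + d) = 3 + 2 * ((a && b) + (a && c) + (b && c)) + 4 * (d && [|| a, b | c]).
Proof. by case: a; case: b; case: c; case: d. Qed.

Section OddWeightCells.
Variables (C : finType) (a b c d : C -> bool).
Hypothesis odd_cell : forall p, odd (a p + b p + c p + d p).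

Lemma card_odd_weight_cells :
  3 * (#|[set p | a p]| + #|[set p | b p]| + #|[set p | c p]| + #|[set p | d p]|) =
  3 * #|C| + 2 * (#|[set p | a p && b p]| + #|[set p | a p && c p]| + #|[set p | b p && c p]|)
  + 4 * #|[set p | d p && [|| a p, b p | c p]]|.
Proof.
rewrite !card_set_sum -!big_split big_distrr /= (eq_bigr _ (fun p _ => odd_weight4 (odd_cell p))).
rewrite !big_split /= big1_eq sum_nat_const (_ : #|xpredT| = #|C|) //; lia.
Qed.
End OddWeightCells.

Lemma card_regular_ones n (F : bArray n) lam :
  regular F lam -> #|[set p : 'I_n * 'I_n | F p.1 p.2]| = n * lam.
Proof.
case=> rows _; rewrite card_set_sum -(pair_big xpredT xpredT (fun i j => F i j : nat)) /=.
rewrite (eq_bigr (fun=> lam)) ?sum_nat_const ?card_ord // => i _.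
by rewrite -(rows i) card_set_sum.
Qed.

Lemma card_set_in_sum (T : finType) (B : {set T}) (P : pred T) :
  #|[set j in B | P j]| = \sum_(j in B) P j.
Proof. by rewrite card_set_sum [RHS]big_mkcond; apply: eq_bigr => j _; case: (j \in B). Qed.

Lemma card_set_supported (T : finType) (B : {set T}) (P : pred T) :
  (forall j, P j -> j \in B) -> #|[set j | P j]| = \sum_(j in B) P j.
Proof.
move=> PB; rewrite -card_set_in_sum; apply: eq_card => j; rewrite !inE.
by case: (boolP (P j)) => [/PB -> | ]; rewrite ?andbF.
Qed.

Definition line_pattern (T : finType) (B : {set T}) (a b c : T -> bool) (u v w : bool) :=
  [set j in B | [&& a j == u, b j == v & c j == w]].

Section OddLine.
Variables (T : finType) (B : {set T}) (a b c : T -> bool) (k : nat).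
Hypotheses (card_a : #|[set j | a j]| = k) (card_b : #|[set j | b j]| = k)
  (card_c : #|[set j | c j]| = k).
Hypothesis supp : forall j, [|| a j, b j | c j] -> j \in B.
Hypothesis odd_in : forall j, j \in B -> odd (a j + b j + c j).

Local Notation pattern := (line_pattern B a b c).

Lemma card_block_odd_line : #|B| + 2 * #|pattern true true true| = 3 * k.
Proof.
have [aB bB cB] : [/\ forall j, a j -> j \in B, forall j, b j -> j \in B
                    & forall j, c j -> j \in B].
  by split=> j fj; apply: supp; rewrite fj ?orbT.
rewrite -sum1_card card_set_in_sum big_distrr -big_split /=.
rewrite !mulSn mul0n addn0 -{1}card_a -{1}card_b -card_c.
rewrite !(card_set_supported (B := B)) // -!big_split.
by apply: eq_bigr => j /odd_in; case: (a j); case: (b j); case: (c j).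
Qed.

Lemma card_line_pattern (u v w : bool) : odd (u + v + w) ->
  #|pattern u v w| = if [&& u, v & w] then (3 * k - #|B|)./2 else k - (3 * k - #|B|)./2.
Proof.
rewrite -card_block_odd_line addKn mul2n doubleK.
have single (f : T -> bool) (x y z : bool) : #|[set j | f j]| = k ->
    (forall j, f j -> j \in B) ->
    (forall j, j \in B -> (f j : nat) = [&& a j == x, b j == y & c j == z] + [&& a j, b j & c j]) ->
  #|pattern x y z| = k - #|pattern true true true|.
  move=> <- fB fE; rewrite !card_set_in_sum (card_set_supported fB) (eq_bigr _ fE) big_split /=.
  by under [X in _ - X]eq_bigr do rewrite !eqb_id; rewrite addnK.
case: u; case: v; case: w => //= _.
- apply: single card_a _ _ => [j cj | j /odd_in]; first by apply: supp; rewrite cj ?orbT.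
  by case: (a j); case: (b j); case: (c j).
- apply: single card_b _ _ => [j cj | j /odd_in]; first by apply: supp; rewrite cj ?orbT.
  by case: (a j); case: (b j); case: (c j).
- apply: single card_c _ _ => [j cj | j /odd_in]; first by apply: supp; rewrite cj ?orbT.
  by case: (a j); case: (b j); case: (c j).
Qed.
End OddLine.

Definition rel_block (x : bool) : {set 'I_10} := [set k : 'I_10 | (k < 4) == x].

Lemma card_rel_block x : #|rel_block x| = if x then 4 else 6.
Proof. by case: x; rewrite card_set_sum !big_ord_recr big_ord0. Qed.

Lemma card_rel_line_pattern x (a b c : 'I_10 -> bool) :
    #|[set k | a k]| = 2 -> #|[set k | b k]| = 2 -> #|[set k | c k]| = 2 ->
    (forall k : 'I_10, [|| a k, b k | c k] -> (k < 4) = x) ->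
    (forall k : 'I_10, (k < 4) = x -> odd (a k + b k + c k)) ->
  forall u v w : bool, odd (u + v + w) ->
  #|line_pattern (rel_block x) a b c u v w| = if x then 1 else if [&& u, v & w] then 0 else 2.
Proof.
move=> card_a card_b card_c supp odd_in u v w odd_uvw.
rewrite (card_line_pattern card_a card_b card_c) // ?card_rel_block.
- by case: (x); case: [&& u, v & w].
- by move=> k /supp; rewrite inE => ->.
- by move=> k; rewrite inE => /eqP /odd_in.
Qed.

Lemma card_off_block_cells : #|[set p : 'I_10 * 'I_10 | (p.1 < 4) != (p.2 < 4)]| = 48.
Proof.
rewrite card_set_sum -(pair_big xpredT xpredT (fun i j : 'I_10 => ((i < 4) != (j < 4) : nat))).
by rewrite /= !big_ord_recr !big_ord0.
Qed.

Section Template44222.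
Variables F0 F1 F2 : bArray 10.
Hypothesis tmpl : template [:: 4; 4; 2; 2; 2] [:: F0; F1; F2].
Local Notation ty := (cell_type [:: 4; 4; 2; 2; 2] [:: F0; F1; F2]).

Lemma template_regular : [/\ regular F0 2, regular F1 2 & regular F2 2].
Proof. by case: tmpl => _ _ reg _ _; split; [exact: (reg 0) | exact: (reg 1) | exact: (reg 2)]. Qed.

Lemma template_common_ones :
  [/\ #|[set p : 'I_10 * 'I_10 | F0 p.1 p.2 && F1 p.1 p.2]| = 4,
      #|[set p : 'I_10 * 'I_10 | F0 p.1 p.2 && F2 p.1 p.2]| = 4 &
      #|[set p : 'I_10 * 'I_10 | F1 p.1 p.2 && F2 p.1 p.2]| = 4].
Proof.
case: tmpl => _ _ _ orth _.
split; [have := orth 0 1 | have := orth 0 2 | have := orth 1 2] => /(_ isT isT true true) /= E;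
  by rewrite -[RHS]/(2 * 2) -E; apply: eq_card => p; rewrite !inE !eqb_id.
Qed.

Lemma template_odd_cell (i j : 'I_10) : odd ((i < 4) + (j < 4) + F0 i j + F1 i j + F2 i j).
Proof.
case: tmpl => _ _ _ _ /(_ i j).
rewrite /weight /cell_type /rel_row /rel_col /= !modn2 addn0 !addnA.
by case: odd.
Qed.

Lemma template_off_block0 (i j : 'I_10) :
  (i < 4) != (j < 4) -> [&& ~~ F0 i j, ~~ F1 i j & ~~ F2 i j].
Proof.
move=> ij_off.
have [R0 R1 R2] := template_regular; have [c01 c02 c12] := template_common_ones.
have odd_cell (p : 'I_10 * 'I_10) :
    odd (F0 p.1 p.2 + F1 p.1 p.2 + F2 p.1 p.2 + ((p.1 < 4) != (p.2 < 4))).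
  move: (template_odd_cell p.1 p.2).
  by case: (p.1 < 4); case: (p.2 < 4); case: (F0 _ _); case: (F1 _ _); case: (F2 _ _).
have := card_odd_weight_cells odd_cell.
rewrite (card_regular_ones R0) (card_regular_ones R1) (card_regular_ones R2).
rewrite card_off_block_cells card_prod card_ord c01 c02 c12 => E.
have /cards0_eq/setP/(_ (i, j)) : #|[set p : 'I_10 * 'I_10 |
    ((p.1 < 4) != (p.2 < 4)) && [|| F0 p.1 p.2, F1 p.1 p.2 | F2 p.1 p.2]]| = 0.
  by move: E; set X := #|_|; lia.
by rewrite !inE /= ij_off; case: (F0 i j); case: (F1 i j); case: (F2 i j).
Qed.

Lemma template_odd_on_block (i j : 'I_10) : (i < 4) = (j < 4) -> odd (F0 i j + F1 i j + F2 i j).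
Proof.
move=> ij_on; move: (template_odd_cell i j); rewrite ij_on.
by case: (j < 4); case: (F0 i j); case: (F1 i j); case: (F2 i j).
Qed.

Lemma card_row_pattern (i : 'I_10) (u v w : bool) : odd (u + v + w) ->
  #|line_pattern (rel_block (i < 4)) (F0 i) (F1 i) (F2 i) u v w| =
  if i < 4 then 1 else if [&& u, v & w] then 0 else 2.
Proof.
have [[R0 _] [R1 _] [R2 _]] := template_regular.
move=> odd_uvw; apply: (card_rel_line_pattern (R0 i) (R1 i) (R2 i) _ _ odd_uvw) => j.
- apply: contraTeq; rewrite eq_sym => /template_off_block0.
  by case: (F0 i j); case: (F1 i j); case: (F2 i j).
- by move/esym/template_odd_on_block.
Qed.

Lemma card_col_pattern (j : 'I_10) (u v w : bool) : odd (u + v + w) ->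
  #|line_pattern (rel_block (j < 4)) (F0^~ j) (F1^~ j) (F2^~ j) u v w| =
  if j < 4 then 1 else if [&& u, v & w] then 0 else 2.
Proof.
have [[_ C0] [_ C1] [_ C2]] := template_regular.
move=> odd_uvw; apply: (card_rel_line_pattern (C0 j) (C1 j) (C2 j) _ _ odd_uvw) => i.
- apply: contraTeq => /template_off_block0.
  by case: (F0 i j); case: (F1 i j); case: (F2 i j).
- exact: template_odd_on_block.
Qed.

Lemma cell_type_Q23 (i j : 'I_10) : ((i < 4) && (4 <= j)) || ((4 <= i) && (j < 4)) ->
  drop 2 (ty i j) = [:: false; false; false].
Proof.
rewrite [4 <= i]leqNgt [4 <= j]leqNgt => off.
have /template_off_block0 : (i < 4) != (j < 4) by move: off; case: (i < 4); case: (j < 4).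
by case/and3P => /negbTE F0ij /negbTE F1ij /negbTE F2ij; rewrite /cell_type /= F0ij F1ij F2ij.
Qed.

Lemma cell_type_Q1 (i j : 'I_10) : i < 4 -> j < 4 ->
  ty i j \in [:: [:: true; true; false; false; true]; [:: true; true; false; true; false];
                 [:: true; true; true; false; false]; [:: true; true; true; true; true]].
Proof.
move=> i_rel j_rel; have := template_odd_on_block (etrans i_rel (esym j_rel)).
rewrite /cell_type /rel_row /rel_col /= i_rel j_rel.
by case: (F0 i j); case: (F1 i j); case: (F2 i j).
Qed.

Lemma cell_type_Q4 (i j : 'I_10) : 4 <= i -> 4 <= j ->
  ty i j \in [:: [:: false; false; false; false; true]; [:: false; false; false; true; false];
                 [:: false; false; true; false; false]].
Proof.
rewrite [4 <= i]leqNgt [4 <= j]leqNgt => /negbTE i_nrel /negbTE j_nrel.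
have := template_odd_on_block (etrans i_nrel (esym j_nrel)).
have /cards0_eq/setP/(_ j) :
  #|line_pattern (rel_block (i < 4)) (F0 i) (F1 i) (F2 i) true true true| = 0.
  by rewrite card_row_pattern // i_nrel.
rewrite !inE /cell_type /rel_row /rel_col /= i_nrel j_nrel /=.
by case: (F0 i j); case: (F1 i j); case: (F2 i j).
Qed.

Lemma card_row_type_Q1 (i : 'I_10) (u v w : bool) : i < 4 -> odd (u + v + w) ->
  #|[set j : 'I_10 | (j < 4) && (ty i j == [:: true; true; u; v; w])]| = 1.
Proof.
move=> i_rel odd_uvw; rewrite -[RHS](ifT _ (if [&& u, v & w] then 0 else 2) i_rel).
rewrite -(card_row_pattern i odd_uvw).
apply: eq_card => j; rewrite !inE /cell_type /rel_row /rel_col /= i_rel !eqseq_cons.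
by case: (j < 4); rewrite /= ?andbT.
Qed.

Lemma card_col_type_Q1 (j : 'I_10) (u v w : bool) : j < 4 -> odd (u + v + w) ->
  #|[set i : 'I_10 | (i < 4) && (ty i j == [:: true; true; u; v; w])]| = 1.
Proof.
move=> j_rel odd_uvw; rewrite -[RHS](ifT _ (if [&& u, v & w] then 0 else 2) j_rel).
rewrite -(card_col_pattern j odd_uvw).
apply: eq_card => i; rewrite !inE /cell_type /rel_row /rel_col /= j_rel !eqseq_cons.
by case: (i < 4); rewrite /= ?andbT.
Qed.

Lemma card_row_type_Q4 (i : 'I_10) (u v w : bool) : 4 <= i -> odd (u + v + w) -> ~~ [&& u, v & w] ->
  #|[set j : 'I_10 | (4 <= j) && (ty i j == [:: false; false; u; v; w])]| = 2.
Proof.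
rewrite [4 <= i]leqNgt => /negbTE i_nrel odd_uvw /negbTE not_all.
rewrite -[RHS](ifF 0 2 not_all) -[RHS](ifF 1 _ i_nrel) -(card_row_pattern i odd_uvw).
apply: eq_card => j; rewrite !inE /cell_type /rel_row /rel_col /= i_nrel [4 <= j]leqNgt !eqseq_cons.
by case: (j < 4); rewrite /= ?andbT.
Qed.

Lemma card_col_type_Q4 (j : 'I_10) (u v w : bool) : 4 <= j -> odd (u + v + w) -> ~~ [&& u, v & w] ->
  #|[set i : 'I_10 | (4 <= i) && (ty i j == [:: false; false; u; v; w])]| = 2.
Proof.
rewrite [4 <= j]leqNgt => /negbTE j_nrel odd_uvw /negbTE not_all.
rewrite -[RHS](ifF 0 2 not_all) -[RHS](ifF 1 _ j_nrel) -(card_col_pattern j odd_uvw).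
apply: eq_card => i; rewrite !inE /cell_type /rel_row /rel_col /= j_nrel [4 <= i]leqNgt !eqseq_cons.
by case: (i < 4); rewrite /= ?andbT.
Qed.

End Template44222.

Theorem mainTheorem9 (F0 F1 F2 : bArray 10) :
  let lam := [:: 4; 4; 2; 2; 2] in
  let Fs := [:: F0; F1; F2] in
  let ty := cell_type lam Fs in
  template lam Fs ->
  (forall i j : 'I_10, ((i < 4) && (4 <= j)) || ((4 <= i) && (j < 4)) ->
     drop 2 (ty i j) = [:: false; false; false]) /\
  ((forall i j : 'I_10, i < 4 -> j < 4 ->
     ty i j \in [:: [:: true; true; false; false; true];
                    [:: true; true; false; true; false];
                    [:: true; true; true; false; false];
                    [:: true; true; true; true; true]]) /\
   (forall t, t \in [:: [:: true; true; false; false; true];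
                        [:: true; true; false; true; false];
                        [:: true; true; true; false; false];
                        [:: true; true; true; true; true]] ->
     (forall i : 'I_10, i < 4 -> #|[set j : 'I_10 | (j < 4) && (ty i j == t)]| = 1) /\
     (forall j : 'I_10, j < 4 -> #|[set i : 'I_10 | (i < 4) && (ty i j == t)]| = 1))) /\
  ((forall i j : 'I_10, 4 <= i -> 4 <= j ->
     ty i j \in [:: [:: false; false; false; false; true];
                    [:: false; false; false; true; false];
                    [:: false; false; true; false; false]]) /\
   (forall t, t \in [:: [:: false; false; false; false; true];
                        [:: false; false; false; true; false];
                        [:: false; false; true; false; false]] ->
     (forall i : 'I_10, 4 <= i -> #|[set j : 'I_10 | (4 <= j) && (ty i j == t)]| = 2) /\
     (forall j : 'I_10, 4 <= j -> #|[set i : 'I_10 | (4 <= i) && (ty i j == t)]| = 2))).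
Proof.
move=> lam Fs ty tmpl; split; [|split; split].
- exact: cell_type_Q23 tmpl.
- exact: cell_type_Q1 tmpl.
- move=> t; rewrite !inE => /or4P[]/eqP->; split=> ? ?;
    by [apply: card_row_type_Q1 | apply: card_col_type_Q1].
- exact: cell_type_Q4 tmpl.
- move=> t; rewrite !inE => /or3P[]/eqP->; split=> ? ?;
    by [apply: card_row_type_Q4 | apply: card_col_type_Q4].
Qed.
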